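(* Let $K,L,N$ be positive integers, $M=K/\gcd(K,L)$, and write $L=\prod_p p^{\lambda_p}$, $N=\prod_p p^{\nu_p}$. Let $f_1,\dots,f_n$ and $d_1,\dots,d_n$ be integers such that both $\prod_i f_i$ and $\prod_i (f_i-d_iK)$ are divisible by $N$. Suppose that for every prime $p$ dividing $M$ with $\lambda_p<\nu_p$ there exist integers $0\le\alpha_{i,p}\le\lambda_p$ ($i=1,\dots,n$) such that $p^{\alpha_{i,p}}\mid f_i$ for each $i$ and $\sum_i\alpha_{i,p}\ge\nu_p$. Then $$\frac{\prod_i f_i}{N}\equiv\frac{\prod_i(f_i-d_iK)}{N}\pmod M.$$ *)

From mathcomp Require Import all_boot all_order all_algebra.

From mathcomp Require Import all_boot all_order all_algebra.
From mathcomp Require Import ring.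
Import GRing.Theory Num.Theory.
Local Open Scope ring_scope.

(* It suffices to show N M | A - B, where A = prod f_i and B = prod (f_i - d_i K),
   and this is checked one prime p at a time.  If p does not divide M, then
   p^nu_p divides both A and B.  Otherwise v_p(K) = v_p(M) + lambda_p; when
   nu_p <= lambda_p the factor K of A - B already suffices, and when
   lambda_p < nu_p we pull p^alpha_i out of the i-th factor of both products:
   the cofactors still agree modulo K / p^alpha_i, a multiple of p^(v_p(M)),
   while the pulled-out powers contribute p^(sum alpha_i), at least p^nu_p. *)

Lemma dvdz_prodB (I : Type) (r : seq I) (m : int) (F G : I -> int) :
  (forall i, m %| F i - G i)%Z -> (m %| \prod_(i <- r) F i - \prod_(i <- r) G i)%Z.
Proof.
move=> mFG; elim: r => [|a r IH]; first by rewrite !big_nil subrr dvdz0.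
rewrite !big_cons.
have -> : F a * \prod_(j <- r) F j - G a * \prod_(j <- r) G j =
  F a * (\prod_(j <- r) F j - \prod_(j <- r) G j) + (F a - G a) * \prod_(j <- r) G j
  by ring.
by rewrite rpredD //; [apply: dvdz_mull | apply: dvdz_mulr].
Qed.

Lemma dvdz_prod_shift (I : Type) (r : seq I) (m c : int) (f d : I -> int) :
  (m %| c)%Z -> (m %| \prod_(i <- r) f i - \prod_(i <- r) (f i - d i * c))%Z.
Proof. by move=> mc; apply: dvdz_prodB => i; rewrite opprB addrC subrK dvdz_mull. Qed.

Lemma dvdz_prod_shift_factor (I : Type) (r : seq I) (m c : int) (f d q : I -> int) :
  (forall i, q i %| f i)%Z -> (forall i, q i * m %| c)%Z ->
  ((\prod_(i <- r) q i) * m %| \prod_(i <- r) f i - \prod_(i <- r) (f i - d i * c))%Z.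
Proof.
move=> qf qmc.
pose g i := (f i %/ q i)%Z; pose k i := (c %/ (q i * m))%Z.
have fE i : f i = g i * q i by rewrite divzK.
have fdE i : f i - d i * c = (g i - d i * k i * m) * q i.
  by rewrite {1}fE -{1}(divzK (qmc i)) /k; ring.
rewrite (eq_bigr _ (fun i _ => fE i)) (eq_bigr _ (fun i _ => fdE i)).
by rewrite !big_split /= -mulrBl mulrC dvdz_mul // dvdz_prod_shift.
Qed.

Lemma dvdz_pfactors (m : nat) (x : int) :
  (0 < m)%N -> (forall p, prime p -> ((p ^ logn p m)%N%:Z %| x)%Z) -> (m%:Z %| x)%Z.
Proof.
move=> m_gt0 px; rewrite dvdzE; apply/dvdn_partP => // p.
by rewrite mem_primes p_part => /andP[/px + _]; rewrite dvdzE.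
Qed.

Lemma divz_eq_mod (a b : int) (N M : nat) :
  (0 < N)%N -> (N%:Z %| a)%Z -> (N%:Z %| b)%Z -> ((N * M)%N%:Z %| a - b)%Z ->
  (divz a N%:Z = divz b N%:Z %[mod M%:Z])%Z.
Proof.
move=> N_gt0 /dvdzP[a' ->] /dvdzP[b' ->].
have N_neq0 : N%:Z != 0 by rewrite eqz_nat -lt0n.
rewrite !mulzK // PoszM -mulrBl [X in (X %| _)%Z]mulrC dvdz_mul2r // => MN.
by apply/eqP; rewrite eqz_mod_dvd.
Qed.

Lemma divn_gcdl_gt0 (K L : nat) : (0 < K)%N -> (0 < K %/ gcdn K L)%N.
Proof.
by move=> K_gt0; rewrite divn_gt0 ?gcdn_gt0 ?K_gt0 // dvdn_leq // dvdn_gcdl.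
Qed.

Lemma logn_div_gcd (p K L : nat) :
  prime p -> (0 < K)%N -> (0 < L)%N -> (p %| K %/ gcdn K L)%N ->
  logn p K = (logn p (K %/ gcdn K L) + logn p L)%N.
Proof.
move=> p_pr K_gt0 L_gt0 pM.
have M_gt0 := divn_gcdl_gt0 K L K_gt0.
have vM_gt0 : (0 < logn p (K %/ gcdn K L))%N by rewrite logn_gt0 mem_primes p_pr M_gt0.
have vK : logn p K = (logn p (K %/ gcdn K L) + minn (logn p K) (logn p L))%N.
  by rewrite -logn_gcd // -lognM ?gcdn_gt0 ?K_gt0 // divnK ?dvdn_gcdl.
have vLK : (logn p L <= logn p K)%N.
  rewrite leqNgt; apply/negP => /ltnW /minn_idPl vKL.
  by move: vK; rewrite vKL -{1}[logn p K]add0n => /addIn vM; rewrite -vM in vM_gt0.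
by rewrite (minn_idPr vLK) in vK.
Qed.

Section Fact1.

Variables (K L N n : nat) (f d : 'I_n -> int).
Hypotheses (K_gt0 : (0 < K)%N) (L_gt0 : (0 < L)%N) (N_gt0 : (0 < N)%N).
Hypotheses (N_dvd_A : (N%:Z %| \prod_(i < n) f i)%Z)
           (N_dvd_B : (N%:Z %| \prod_(i < n) (f i - d i * K%:Z))%Z).

Local Notation M := (K %/ gcdn K L)%N.
Local Notation AB := (\prod_(i < n) f i - \prod_(i < n) (f i - d i * K%:Z)).

Lemma pfactor_dvd_AB_coprime p :
  prime p -> ~~ (p %| M)%N -> ((p ^ logn p (N * M))%N%:Z %| AB)%Z.
Proof.
move=> p_pr pNM; have M_gt0 := divn_gcdl_gt0 K L K_gt0.
have vM0 : logn p M = 0%N.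
  by apply/eqP; rewrite -leqn0 leqNgt logn_gt0 mem_primes p_pr M_gt0.
rewrite lognM // vM0 addn0.
have pN : ((p ^ logn p N)%N%:Z %| N%:Z)%Z by rewrite dvdzE pfactor_dvdnn.
by rewrite (dvdz_trans pN) // rpredB.
Qed.

Lemma pfactor_dvd_AB_small p :
  prime p -> (p %| M)%N -> (logn p N <= logn p L)%N ->
  ((p ^ logn p (N * M))%N%:Z %| AB)%Z.
Proof.
move=> p_pr pM vNL.
have KAB : (K%:Z %| AB)%Z by apply: dvdz_prod_shift.
have pK : (p ^ logn p (N * M) %| K)%N.
  apply: dvdn_trans (pfactor_dvdnn p K).
  rewrite dvdn_exp2l // (logn_div_gcd p K L p_pr) // lognM ?divn_gcdl_gt0 // addnC.
  by rewrite leq_add2l.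
by apply: dvdz_trans KAB; rewrite dvdzE.
Qed.

Lemma pfactor_dvd_AB_large p (alpha : 'I_n -> nat) :
  prime p -> (p %| M)%N -> (forall i, alpha i <= logn p L)%N ->
  (forall i, ((p ^ alpha i)%N%:Z %| f i)%Z) -> (logn p N <= \sum_(i < n) alpha i)%N ->
  ((p ^ logn p (N * M))%N%:Z %| AB)%Z.
Proof.
move=> p_pr pM alphaL alpha_f vN_le.
have alphaM_K i : ((p ^ alpha i)%N%:Z * (p ^ logn p M)%N%:Z %| K%:Z)%Z.
  rewrite -PoszM -expnD dvdzE; apply: dvdn_trans (pfactor_dvdnn p K).
  by rewrite dvdn_exp2l // (logn_div_gcd p K L p_pr) // addnC leq_add2l.
have := dvdz_prod_shift_factor _ (index_enum 'I_n) _ _ _ d _ alpha_f alphaM_K.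
rewrite -(big_morph Posz PoszM (erefl 1%:Z)) -expn_sum -PoszM -expnD.
apply: dvdz_trans; rewrite dvdzE dvdn_exp2l // lognM ?divn_gcdl_gt0 //.
by rewrite leq_add2r.
Qed.

End Fact1.

Theorem fact1 (K L N : nat) (n : nat) (f d : 'I_n -> int) :
  (0 < K)%N -> (0 < L)%N -> (0 < N)%N ->
  (N%:Z %| \prod_(i < n) f i)%Z ->
  (N%:Z %| \prod_(i < n) (f i - d i * K%:Z))%Z ->
  (forall p : nat, prime p -> (p %| K %/ gcdn K L)%N ->
     (logn p L < logn p N)%N ->
     exists alpha : 'I_n -> nat,
       [/\ forall i, (alpha i <= logn p L)%N,
           forall i, ((p ^ alpha i)%N%:Z %| f i)%Z
         & (logn p N <= \sum_(i < n) alpha i)%N]) ->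
  (divz (\prod_(i < n) f i) N%:Z = divz (\prod_(i < n) (f i - d i * K%:Z)) N%:Z
     %[mod (K %/ gcdn K L)%N%:Z])%Z.
Proof.
move=> K_gt0 L_gt0 N_gt0 N_dvd_A N_dvd_B alphaP.
apply: divz_eq_mod => //.
apply: dvdz_pfactors => [|p p_pr]; first by rewrite muln_gt0 N_gt0 divn_gcdl_gt0.
have [pM | pNM] := boolP (p %| K %/ gcdn K L)%N; last exact: pfactor_dvd_AB_coprime.
have [vLN | vNL] := ltnP (logn p L) (logn p N); last exact: pfactor_dvd_AB_small.
have [alpha [alphaL alpha_f vN_le]] := alphaP p p_pr pM vLN.
exact: pfactor_dvd_AB_large alphaL alpha_f vN_le.
Qed.
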